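(* Consider $n\ge2$ agents in $\mathbb{R}^d$ ($d\ge2$) with undirected graph $\mathcal{G}=(\mathcal{V},\mathcal{E})$, constant desired bearings $\{g_{ij}^*\}_{(i,j)\in\mathcal{E}}$, leaders $\mathcal{V}_\ell=\{1,\dots,n_\ell\}$ with positions $p_i(t)$, $\dot p_i=v_i^*$, and followers $\mathcal{V}_f=\{n_\ell+1,\dots,n\}$, and suppose the standing assumption below holds. Let $p^*(t)$ be the target formation, so that $p_\ell^*(t)=p_\ell(t)$ and $p_f^*(t)=-\mathcal{L}_{ff}^{-1}\mathcal{L}_{f\ell}p_\ell(t)$. If the velocity of each leader is constant and equal to a common vector, $v_i^*=\mathbf{v}_c\in\mathbb{R}^d$ for all $i\in\mathcal{V}_\ell$, then $\dot c(p^*(t))\equiv\mathbf{v}_c$ and $\dot s(p^*(t))\equiv 0$.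
   Context: $P_x=I_d-\frac{xx^T}{\|x\|^2}$. The bearing Laplacian $\mathcal{L}\in\mathbb{R}^{dn\times dn}$ has $(i,j)$-th $d\times d$ block $0$ if $i\ne j,(i,j)\notin\mathcal{E}$; $-P_{g_{ij}^*}$ if $i\ne j,(i,j)\in\mathcal{E}$; $\sum_{k\in\mathcal{N}_i}P_{g_{ik}^*}$ if $i=j$; partitioned into leader/follower blocks $\mathcal{L}_{\ell\ell},\mathcal{L}_{\ell f},\mathcal{L}_{f\ell},\mathcal{L}_{ff}$. Target formation: $p^*(t)\in\mathbb{R}^{dn}$ with $p_i^*(t)=p_i(t)$ for leaders and $(p_j^*-p_i^* )/\|p_j^*-p_i^*\|=g_{ij}^*$ for all edges. Infinitesimal bearing rigidity of $q$: with $g_k=(q_j-q_i)/\|q_j-q_i\|$ for the $k$-th oriented edge, $F_B(q)=[g_1^T,\dots,g_m^T]^T$, $R_B=\partial F_B/\partial q$, require $\mathrm{Null}(R_B(q))=\mathrm{span}\{\mathbf{1}_n\otimes I_d,q\}$. Standing assumption: the target formation exists for all $t$, is infinitesimally bearing rigid, and $n_\ell\ge2$; then $\mathcal{L}_{ff}$ is positive definite. Centroid and scale of $q\in\mathbb{R}^{dn}$: $c(q)=\frac1n\sum_{i=1}^n q_i$, $s(q)=\sqrt{\frac1n\sum_{i=1}^n\|q_i-c(q)\|^2}=\frac{1}{\sqrt n}\|q-\mathbf{1}_n\otimes c(q)\|$. *)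

From HB Require Import structures.
From mathcomp Require Import all_boot all_order all_algebra.
From mathcomp Require Import all_classical all_reals all_analysis.
Set Implicit Arguments. Unset Strict Implicit. Unset Printing Implicit Defensive.
Import Order.TTheory GRing.Theory Num.Theory.
Local Open Scope ring_scope.

(* agent-major ordering: entry k of agent i sits at flat index i*d + k *)

Lemma agent_subproof m d (u : 'I_(m * d)) : (u %/ d < m)%N.
Proof.
case: d u => [|d] u; first by case: u => u; rewrite muln0.
by rewrite ltn_divLR.
Qed.

Lemma coord_subproof m d (u : 'I_(m * d)) : (u %% d < d)%N.
Proof.
case: d u => [|d] u; first by case: u => u; rewrite muln0.
by rewrite ltn_pmod.
Qed.

Lemma flat_idx_subproof m d (i : 'I_m) (k : 'I_d) : (i * d + k < m * d)%N.
Proof.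
have hi := ltn_ord i; have hk := ltn_ord k.
apply: (@leq_trans (i.+1 * d)); first by rewrite mulSn [(d + _)%N]addnC ltn_add2l.
by rewrite leq_mul2r hi orbT.
Qed.

Definition agent m d (u : 'I_(m * d)) : 'I_m := Ordinal (agent_subproof u).
Definition coord m d (u : 'I_(m * d)) : 'I_d := Ordinal (coord_subproof u).
Definition flat_idx m d (i : 'I_m) (k : 'I_d) : 'I_(m * d) :=
  Ordinal (flat_idx_subproof i k).

(* For the whole team of nl leaders followed by nf followers,
   configurations are stacked as [p_leaders; p_followers] in R^(nl*d + nf*d). *)
Definition agentN nl nf d (u : 'I_(nl * d + nf * d)) : 'I_(nl + nf) :=
  match fintype.split u with
  | inl a => lshift nf (agent a)
  | inr b => rshift nl (agent b)
  end.
Definition coordN nl nf d (u : 'I_(nl * d + nf * d)) : 'I_d :=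
  match fintype.split u with
  | inl a => coord a
  | inr b => coord b
  end.

(* A configuration of m agents in R^d is a matrix whose i-th row is p_i. *)
Definition flat {R : Type} m d (A : 'M[R]_(m, d)) : 'cV[R]_(m * d) :=
  \col_u A (agent u) (coord u).
Definition unflat {R : Type} m d (v : 'cV[R]_(m * d)) : 'M[R]_(m, d) :=
  \matrix_(i, k) v (flat_idx i k) 0.

Section Bearing.
Variable R : realType.

Definition enorm2 d (x : 'rV[R]_d) : R := \sum_k x 0 k ^+ 2.
Definition enorm d (x : 'rV[R]_d) : R := Num.sqrt (enorm2 x).

Definition projP d (x : 'rV[R]_d) : 'M[R]_d :=
  1%:M - (enorm2 x)^-1 *: (x^T *m x).

Definition lap_block n d (E : rel 'I_n) (g : 'I_n -> 'I_n -> 'rV[R]_d)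
    (i j : 'I_n) : 'M[R]_d :=
  if i == j then \sum_(k | E i k) projP (g i k)
  else if E i j then - projP (g i j) else 0.

Definition bearing_laplacian nl nf d (E : rel 'I_(nl + nf))
    (g : 'I_(nl + nf) -> 'I_(nl + nf) -> 'rV[R]_d) : 'M[R]_(nl * d + nf * d) :=
  \matrix_(u, v) lap_block E g (agentN u) (agentN v) (coordN u) (coordN v).

Definition Lff nl nf d E g : 'M[R]_(nf * d) :=
  drsubmx (@bearing_laplacian nl nf d E g).
Definition Lfl nl nf d E g : 'M[R]_(nf * d, nl * d) :=
  dlsubmx (@bearing_laplacian nl nf d E g).

Definition bearing n d (q : 'M[R]_(n, d)) (i j : 'I_n) : 'rV[R]_d :=
  (enorm (row j q - row i q))^-1 *: (row j q - row i q).

(* Null(R_B(q)), R_B = dF_B/dq: delta is in the kernel of the Jacobian of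
   F_B iff the directional derivative of every edge bearing vanishes. *)
Definition in_null_RB n d (E : rel 'I_n) (q delta : 'M[R]_(n, d)) : Prop :=
  forall i j, E i j -> derive (fun x : 'M[R]_(n, d) => bearing x i j) q delta = 0.

Definition in_trivial_span n d (q delta : 'M[R]_(n, d)) : Prop :=
  exists (a : 'rV[R]_d) (c : R), delta = (\matrix_(i, k) a 0 k) + c *: q.

Definition inf_bearing_rigid n d (E : rel 'I_n) (q : 'M[R]_(n, d)) : Prop :=
  forall delta, in_null_RB E q delta <-> in_trivial_span q delta.

Definition centroid n d (q : 'M[R]_(n, d)) : 'rV[R]_d :=
  (n%:R)^-1 *: \sum_(i < n) row i q.
Definition fscale n d (q : 'M[R]_(n, d)) : R :=
  Num.sqrt ((n%:R)^-1 * \sum_(i < n) enorm2 (row i q - centroid q)).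

Definition leaders_mx nl d (p : 'I_nl -> R -> 'rV[R]_d) (t : R) : 'M[R]_(nl, d) :=
  \matrix_(i, k) p i t 0 k.

Definition target nl nf d E g (p : 'I_nl -> R -> 'rV[R]_d) (t : R)
    : 'M[R]_(nl + nf, d) :=
  col_mx (leaders_mx p t)
    (unflat (- (invmx (@Lff nl nf d E g) *m @Lfl nl nf d E g
                *m flat (leaders_mx p t)))).

End Bearing.

From Pilot Require Import Defs.
From HB Require Import structures.
From mathcomp Require Import all_boot all_order all_algebra.
From mathcomp Require Import all_classical all_reals all_analysis.
From mathcomp Require Import ring.
Import Order.TTheory GRing.Theory Num.Theory.
Local Open Scope ring_scope.

(* Every block row of the bearing Laplacian sums to zero, so the Laplacian
   annihilates uniform translations 1_n (x) v.  Its follower rows then give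
   L_ff (1 (x) v) = - L_fl (1 (x) v): the target formation of uniformly
   translated leaders is the uniformly translated target formation.  Leaders
   with a common constant velocity v_c translate uniformly, so p*(t) moves by
   a rigid translation at speed v_c; the centroid follows it and the scale is
   translation invariant. *)

Lemma agent_flat_idx m d (i : 'I_m) (k : 'I_d) : agent (flat_idx i k) = i.
Proof.
apply/val_inj => /=; have hk := ltn_ord k.
by rewrite divnMDl ?(leq_ltn_trans _ hk) // divn_small // addn0.
Qed.

Lemma coord_flat_idx m d (i : 'I_m) (k : 'I_d) : Defs.coord (flat_idx i k) = k.
Proof. by apply/val_inj => /=; rewrite modnMDl modn_small. Qed.

Lemma flat_idx_agent m d (u : 'I_(m * d)) : flat_idx (agent u) (Defs.coord u) = u.
Proof. by apply/val_inj => /=; rewrite -divn_eq. Qed.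

Lemma split_lshift m n (i : 'I_m) : fintype.split (lshift n i) = inl i.
Proof. exact: (unsplitK (inl i)). Qed.

Lemma split_rshift m n (i : 'I_n) : fintype.split (rshift m i) = inr i.
Proof. exact: (unsplitK (inr i)). Qed.

Section FlatSums.
Variable V : nmodType.

Lemma sum_flat_idx m d (F : 'I_m -> 'I_d -> V) :
  \sum_(u < m * d) F (agent u) (Defs.coord u) = \sum_i \sum_k F i k.
Proof.
rewrite pair_big /= (reindex (fun ik : 'I_m * 'I_d => flat_idx ik.1 ik.2)) /=.
  by apply: eq_bigr => -[i k] _ /=; rewrite agent_flat_idx coord_flat_idx.
exists (fun u => (agent u, Defs.coord u)) => [[i k]|u] _ /=.
  by rewrite agent_flat_idx coord_flat_idx.
by rewrite flat_idx_agent.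
Qed.

Lemma sum_agentN nl nf d (F : 'I_(nl + nf) -> 'I_d -> V) :
  \sum_(u < nl * d + nf * d) F (agentN u) (coordN u) = \sum_j \sum_k F j k.
Proof.
rewrite big_split_ord [RHS]big_split_ord /=; congr (_ + _).
  rewrite -(sum_flat_idx _ _ (fun i k => F (lshift nf i) k)).
  by apply: eq_bigr => u _; rewrite /agentN /coordN split_lshift.
rewrite -(sum_flat_idx _ _ (fun i k => F (rshift nl i) k)).
by apply: eq_bigr => u _; rewrite /agentN /coordN split_rshift.
Qed.

End FlatSums.

Section FlatLinear.
Variables (R : pzRingType) (m d : nat).

Lemma flat_is_linear : linear (@flat R m d).
Proof. by move=> c A B; apply/matrixP => u z; rewrite !mxE. Qed.
HB.instance Definition _ :=
  GRing.isLinear.Build R _ _ _ (@flat R m d) flat_is_linear.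

Lemma unflat_is_linear : linear (@unflat R m d).
Proof. by move=> c A B; apply/matrixP => u z; rewrite !mxE. Qed.
HB.instance Definition _ :=
  GRing.isLinear.Build R _ _ _ (@unflat R m d) unflat_is_linear.

Lemma flatK : cancel (@flat R m d) (@unflat R m d).
Proof.
by move=> A; apply/matrixP => i k; rewrite !mxE agent_flat_idx coord_flat_idx.
Qed.

End FlatLinear.

Section Translation.
Variables (R : realType) (d : nat).

Definition repeat_row n (v : 'rV[R]_d) : 'M[R]_(n, d) := \matrix_(i, k) v 0 k.

Lemma row_repeat_row n (v : 'rV[R]_d) i : row i (repeat_row n v) = v.
Proof. by apply/matrixP => a k; rewrite !mxE (ord1 a). Qed.

Lemma repeat_row_add n1 n2 (v : 'rV[R]_d) :
  repeat_row (n1 + n2) v = col_mx (repeat_row n1 v) (repeat_row n2 v).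
Proof.
by apply/matrixP => i k; rewrite !mxE; case: splitP => a _; rewrite !mxE.
Qed.

Lemma centroid_translate n (Q : 'M[R]_(n, d)) (v : 'rV[R]_d) c :
  (0 < n)%N -> centroid (Q + c *: repeat_row n v) = centroid Q + c *: v.
Proof.
move=> n_gt0; rewrite /centroid.
under eq_bigr do rewrite linearD linearZ /= row_repeat_row.
rewrite big_split /= sumr_const card_ord scalerDr; congr (_ + _).
rewrite -(scaler_nat n (c *: v)) !scalerA mulrA mulVf ?mul1r //.
by rewrite pnatr_eq0 -lt0n.
Qed.

Lemma fscale_translate n (Q : 'M[R]_(n, d)) (v : 'rV[R]_d) c :
  (0 < n)%N -> fscale (Q + c *: repeat_row n v) = fscale Q.
Proof.
move=> n_gt0; rewrite /fscale centroid_translate //.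
congr (Num.sqrt (_ * _)); apply: eq_bigr => i _.
by rewrite linearD linearZ /= row_repeat_row opprD addrACA subrr addr0.
Qed.

End Translation.
Arguments repeat_row {R d} n v.

Section BearingLaplacian.
Variables (R : realType) (d nl nf : nat) (E : rel 'I_(nl + nf))
  (g : 'I_(nl + nf) -> 'I_(nl + nf) -> 'rV[R]_d).
Hypothesis E_irr : irreflexive E.

Lemma lap_block_row_sum i : \sum_j lap_block E g i j = 0.
Proof.
have lap_blockE j : lap_block E g i j =
    (if j == i then \sum_(k | E i k) projP (g i k) else 0)
    - (if E i j then projP (g i j) else 0).
  rewrite /lap_block eq_sym; case: eqP => [->|_]; first by rewrite E_irr subr0.
  by case: (E i j); rewrite ?sub0r ?oppr0.
rewrite (eq_bigr _ (fun j _ => lap_blockE j)) sumrB -!big_mkcond /=.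
by rewrite big_pred1_eq subrr.
Qed.

Lemma bearing_laplacian_translation (v : 'rV[R]_d) :
  bearing_laplacian E g *m (\col_u v 0 (coordN u)) = 0.
Proof.
apply/matrixP => u z; rewrite !mxE.
under eq_bigr do rewrite !mxE.
rewrite (sum_agentN _ _ _ _
  (fun j l => lap_block E g (agentN u) j (coordN u) l * v 0 l)) exchange_big /=.
apply: big1 => l _.
by rewrite -mulr_suml -summxE lap_block_row_sum mxE mul0r.
Qed.

Lemma follower_rows_translation (v : 'rV[R]_d) :
  Lfl E g *m flat (repeat_row nl v) + Lff E g *m flat (repeat_row nf v) = 0.
Proof.
have stackE : (\col_u v 0 (coordN u) : 'cV_(nl * d + nf * d))
    = col_mx (flat (repeat_row nl v)) (flat (repeat_row nf v)).
  apply/matrixP => u z; rewrite !mxE.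
  case: splitP => a ua; rewrite !mxE /coordN.
    by rewrite (_ : u = lshift _ a) ?split_lshift //; apply/val_inj.
  by rewrite (_ : u = rshift _ a) ?split_rshift //; apply/val_inj.
have := bearing_laplacian_translation v.
rewrite stackE -[bearing_laplacian _ _]submxK mul_block_col.
by move/eqP; rewrite col_mx_eq0 => /andP[_ /eqP].
Qed.

Lemma target_followers_translation (v : 'rV[R]_d) :
  Lff E g \in unitmx ->
  - (invmx (Lff E g) *m Lfl E g *m flat (repeat_row nl v))
    = flat (repeat_row nf v).
Proof.
move=> Lff_unit; have /eqP := follower_rows_translation v.
rewrite addr_eq0 => /eqP Lfl_v.
by rewrite -mulmxA Lfl_v mulmxN mulmxA mulVmx // mul1mx opprK.
Qed.

Lemma target_translate (p : 'I_nl -> R -> 'rV[R]_d) (v : 'rV[R]_d) s t c :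
  Lff E g \in unitmx ->
  leaders_mx p s = leaders_mx p t + c *: repeat_row nl v ->
  target E g p s = target E g p t + c *: repeat_row (nl + nf) v.
Proof.
move=> Lff_unit leaders_st; rewrite /target leaders_st linearD linearZ /=.
rewrite mulmxDr -scalemxAr opprD -scalerN target_followers_translation //.
by rewrite linearD linearZ /= flatK repeat_row_add scale_col_mx add_col_mx.
Qed.

End BearingLaplacian.

Lemma posdef_unitmx (R : numFieldType) N (A : 'M[R]_N) :
  (forall x : 'cV[R]_N, x != 0 -> 0 < (x^T *m A *m x) 0 0) -> A \in unitmx.
Proof.
move=> A_pd; rewrite unitmxE unitfE; apply/negP => /det0P [v v_neq0 vA].
have := A_pd v^T; rewrite trmx_eq0 trmxK vA mul0mx mxE ltxx.
by move/(_ v_neq0).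
Qed.

Section ConstantVelocity.
Variable R : realType.

Lemma is_derive_scalel {W : normedModType R} (x : R) (w : W) :
  is_derive x 1 ( *:%R ^~ w) w.
Proof.
apply: DeriveDef; first exact: diff_derivable.
by rewrite deriveE // diff_val scale1r.
Qed.

Lemma is_derive_affine {W : normedModType R} (t : R) (C w : W) :
  is_derive t 1 (fun s => C + (s - t) *: w) w.
Proof.
have -> : (fun s => C + (s - t) *: w) = cst (C - t *: w) \+ ( *:%R ^~ w).
  by apply/funext => s /=; rewrite scalerBl addrA addrAC.
by have := is_deriveD (is_derive_cst (C - t *: w) t 1) (is_derive_scalel t w);
  rewrite add0r.
Qed.

Lemma is_derive_mx_entry {m n} {f : R -> 'M[R]_(m, n)} {s : R} {D} i j :
  is_derive s 1 f D -> is_derive s 1 (fun x => f x i j) (D i j).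
Proof.
move=> f_D; have f_der : derivable f s 1 by case: f_D.
have := derive_mx f_der; rewrite derive_val => ->; rewrite mxE.
apply: derivableP; exact: (proj1 (derivable_mxP f s 1) f_der).
Qed.

Lemma constant_velocity_affine {m n} {f : R -> 'M[R]_(m, n)} {v : 'M[R]_(m, n)} :
  (forall s : R, is_derive s 1 f v) -> forall s t : R, f s = f t + (s - t) *: v.
Proof.
move=> f_v s t; apply/matrixP => i k; rewrite !mxE.
have drift_cst x : is_derive x (1 : R) (fun y => f y i k - y * v i k) 0.
  have := is_deriveB (is_derive_mx_entry i k (f_v x)) (is_derive_scalel x (v i k)).
  by rewrite subrr.
have /= drift_st := is_derive_0_is_cst s t drift_cst.
by rewrite -[LHS](subrK (s * v i k)) drift_st; ring.
Qed.

Lemma leaders_constant_velocity d nl (p : 'I_nl -> R -> 'rV[R]_d) (v : 'rV[R]_d) :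
  (forall i (t : R), is_derive t 1 (p i) v) ->
  forall s t : R, leaders_mx p s = leaders_mx p t + (s - t) *: repeat_row nl v.
Proof.
move=> p_v s t; apply/matrixP => i k; rewrite !mxE.
by rewrite (constant_velocity_affine (p_v i) s t) !mxE.
Qed.

End ConstantVelocity.

Theorem proposition1 (R : realType) (d nl nf : nat)
  (E : rel 'I_(nl + nf))
  (g : 'I_(nl + nf) -> 'I_(nl + nf) -> 'rV[R]_d)
  (p : 'I_nl -> R -> 'rV[R]_d)
  (vc : 'rV[R]_d) :
  (2 <= d)%N -> (2 <= nl + nf)%N ->
  symmetric E -> irreflexive E ->
  (* standing assumption: n_l >= 2, and for every t the target formation
     exists and is infinitesimally bearing rigid *)
  (2 <= nl)%N ->
  (forall t : R, exists q : 'M[R]_(nl + nf, d),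
      (forall i : 'I_nl, row (lshift nf i) q = p i t) /\
      (forall i j, E i j -> row j q != row i q /\ bearing q i j = g i j) /\
      inf_bearing_rigid E q) ->
  (* consequence of the standing assumption recorded in the context *)
  (forall x : 'cV[R]_(nf * d), x != 0 ->
      0 < (x^T *m Lff E g *m x) 0 0) ->
  (* common constant leader velocity *)
  (forall (i : 'I_nl) (t : R), is_derive t 1 (p i) vc) ->
  forall t : R,
    is_derive t 1 (fun s => centroid (target E g p s)) vc /\
    is_derive t 1 (fun s => fscale (target E g p s)) 0.
Proof.
move=> _ n_ge2 _ E_irr _ _ Lff_pd p_vc t.
have n_gt0 : (0 < nl + nf)%N by apply: leq_trans n_ge2.
have target_st s : target E g p s
    = target E g p t + (s - t) *: repeat_row (nl + nf) vc.
  apply: target_translate => //; first exact: posdef_unitmx.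
  exact: leaders_constant_velocity.
split.
  under eq_fun do rewrite target_st centroid_translate //.
  exact: is_derive_affine.
under eq_fun do rewrite target_st fscale_translate //.
exact: is_derive_cst.
Qed.
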